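(* Let $\omega\in\mathbb{F}_8$ be a root of $y^3+y+1$, let $m\in\mathbb{N}$, let $\emptyset\neq L\subsetneq[m]$, and let $D=\Delta_L+\omega\Delta_L+\omega^2\Delta_L\subseteq\mathbb{F}_8^m$ and $D^*=D\setminus\{0\}$. Then $C_{D^*}$ is a $1$-weight linear code over $\mathbb{F}_8$ of length $2^{3|L|}-1$, dimension $|L|$ and minimum distance $7\cdot2^{3(|L|-1)}$. In particular it is a minimal code. Moreover, $C_{D^*}$ is a Griesmer code and hence distance optimal. If $A_i$ denotes the number of codewords of weight $i$ and $Z_i=|\{v\in\mathbb{F}_8^m: wt(c_{D^*}(v))=i\}|$ for $0\le i\le|D^*|$, then $Z_0=2^{3(m-|L|)}$ and $Z_i=Z_0A_i$.
   Context: $[m]=\{1,\dots,m\}$; $\Delta_L=\{w\in\mathbb{F}_2^m:\{i:w_i\ne0\}\subseteq L\}$. $A+\omega B+\omega^2C=\{a+\omega b+\omega^2 c: a\in A,b\in B,c\in C\}$. For an ordered finite set $P\subseteq\mathbb{F}_8^m$, $c_P(v)=(v\cdot d)_{d\in P}$ and $C_P=\{c_P(v):v\in\mathbb{F}_8^m\}$. A code is $1$-weight if all nonzero codewords have the same Hamming weight. A nonzero codeword $c$ is minimal if every nonzero codeword $c'$ with $\mathrm{Supp}(c')\subseteq\mathrm{Supp}(c)$ is a scalar multiple of $c$; a minimal code is one all of whose nonzero codewords are minimal. An $[n,k,d]$ code over $\mathbb{F}_q$ is Griesmer if $\sum_{i=0}^{k-1}\lceil d/q^i\rceil=n$; it is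 distance optimal if no $[n,k,d+1]$ linear code over $\mathbb{F}_q$ exists. *)

From HB Require Import structures.
From mathcomp Require Import all_boot all_order all_algebra all_field.
Set Implicit Arguments. Unset Strict Implicit. Unset Printing Implicit Defensive.
Import GRing.Theory.
Local Open Scope ring_scope.

Section Codes.
Variable F : finFieldType.

(* Delta_L : vectors of F_2^m (entries 0 or 1, seen inside F) supported in L *)
Definition Delta (m : nat) (L : {set 'I_m}) : {set 'rV[F]_m} :=
  [set w : 'rV[F]_m | [forall i : 'I_m,
     ((w 0 i == 0) || (w 0 i == 1)) && ((w 0 i != 0) ==> (i \in L))]].

Definition Dset (m : nat) (om : F) (L : {set 'I_m}) : {set 'rV[F]_m} :=
  [set x : 'rV[F]_m | [exists a in Delta L, exists b in Delta L,
      exists c in Delta L, x == a + om *: b + om ^+ 2 *: c]].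

Definition Dstar (m : nat) (om : F) (L : {set 'I_m}) : {set 'rV[F]_m} :=
  Dset om L :\ 0.

Definition genmatP (m : nat) (P : {set 'rV[F]_m}) : 'M[F]_(m, #|P|) :=
  \matrix_(i < m, j < #|P|) (enum_val (A := P) j) 0 i.

(* c_P(v) = (v . d)_{d in P};  (v *m genmatP P) 0 j = \sum_i v_i d_j i *)
Definition cw (m : nat) (P : {set 'rV[F]_m}) (v : 'rV[F]_m) : 'rV[F]_#|P| :=
  v *m genmatP P.

Definition code (m : nat) (P : {set 'rV[F]_m}) : {set 'rV[F]_#|P|} :=
  [set cw P v | v : 'rV[F]_m].

Definition supp (n : nat) (c : 'rV[F]_n) : {set 'I_n} := [set j | c 0 j != 0].
Definition hw (n : nat) (c : 'rV[F]_n) : nat := #|supp c|.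

Definition lin_code (n : nat) (C : {set 'rV[F]_n}) : Prop :=
  0 \in C /\ forall (a : F) x y, x \in C -> y \in C -> a *: x + y \in C.

Definition one_weight (n : nat) (C : {set 'rV[F]_n}) : Prop :=
  exists w, forall c, c \in C -> c != 0 -> hw c = w.

Definition is_min_dist (n : nat) (C : {set 'rV[F]_n}) (d : nat) : Prop :=
  (exists2 c, c \in C & c != 0 /\ hw c = d) /\
  (forall c, c \in C -> c != 0 -> (d <= hw c)%N).

Definition minimal_cw (n : nat) (C : {set 'rV[F]_n}) (c : 'rV[F]_n) : Prop :=
  c != 0 /\ forall c', c' \in C -> c' != 0 -> supp c' \subset supp c ->
    exists a : F, c' = a *: c.

Definition minimal_code (n : nat) (C : {set 'rV[F]_n}) : Prop :=
  forall c, c \in C -> c != 0 -> minimal_cw C c.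

Definition exists_lin_code (n k d : nat) : Prop :=
  exists G : 'M[F]_(k, n), \rank G = k /\
    is_min_dist [set v *m G | v : 'rV[F]_k] d.

Definition distance_optimal (n k d : nat) : Prop := ~ exists_lin_code n k d.+1.

Definition Acount (n : nat) (C : {set 'rV[F]_n}) (i : nat) : nat :=
  #|[set c in C | hw c == i]|.

Definition Zcount (m : nat) (P : {set 'rV[F]_m}) (i : nat) : nat :=
  #|[set v : 'rV[F]_m | hw (cw P v) == i]|.

End Codes.

Definition ceildiv (a b : nat) : nat := ((a + b.-1) %/ b)%N.

Definition griesmer (q n k d : nat) : Prop :=
  (\sum_(i < k) ceildiv d (q ^ i))%N = n.

From HB Require Import structures.
From mathcomp Require Import all_boot all_order all_algebra all_field.
From mathcomp Require Import ring zify.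
Set Implicit Arguments. Unset Strict Implicit. Unset Printing Implicit Defensive.
Import GRing.Theory.
Local Open Scope ring_scope.

(* Since x^3 + x + 1 is irreducible over F_2, the elements 1, om, om^2 form an
   F_2-basis of F_8, so D is the F_8-subspace of vectors supported on L, of
   dimension l, and C_{D*} is the q-ary simplex code of dimension l (q = 8).
   For v not vanishing on L, the linear form x |-> v.x on D is onto and each
   of its fibres has q^(l-1) elements, so every nonzero codeword has weight
   (q-1) q^(l-1); for v vanishing on L the codeword is 0, which gives Z_0, the
   rank and Z_i = Z_0 A_i.  A one-weight linear code is minimal, and the
   Griesmer sum is a geometric sum.  Optimality is the Plotkin averaging
   bound: the weights of all codewords of an [n, k] code add up to at most
   n (q-1) q^(k-1), since each coordinate is nonzero on at most
   (q-1) q^(k-1) codewords. *)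

Section F2Coordinates.
Variable F : fieldType.
Hypothesis pcharF2 : 2 \in [pchar F].
Variable om : F.
Hypothesis om_root : om ^+ 3 + om + 1 = 0.

Definition f2comb (t : bool * bool * bool) : F :=
  let: (a, b, c) := t in a%:R + b%:R * om + c%:R * om ^+ 2.

Lemma om_neq_nat (a : bool) : om != a%:R.
Proof.
apply/eqP=> om_a; move: om_root; rewrite om_a.
case: (a) => /=; rewrite ?expr0n ?expr1n ?add0r ?(addrr_pchar2 pcharF2) ?add0r.
all: by apply/eqP; rewrite oner_eq0.
Qed.

Lemma om_sq_neq (a b : bool) : om ^+ 2 != a%:R + b%:R * om.
Proof.
have char2 := addrr_pchar2 pcharF2.
apply/eqP=> om_sq.
have om_cube : om ^+ 3 = a%:R * om + b%:R * (a%:R + b%:R * om).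
  by rewrite exprS om_sq mulrDr mulrCA -expr2 om_sq (mulrC om).
move: om_root; rewrite om_cube {om_cube}.
case: a b om_sq => [] [] _ /=; rewrite ?mul0r ?mul1r ?addr0 ?add0r.
- rewrite -addrA addrACA char2 add0r addrAC char2 add0r; apply/eqP.
  exact: (om_neq_nat false).
- by rewrite char2 add0r; apply/eqP; rewrite oner_eq0.
- by rewrite char2 add0r; apply/eqP; rewrite oner_eq0.
- by move/eqP; rewrite addr_eq0 (oppr_pchar2 pcharF2) (negbTE (om_neq_nat true)).
Qed.

Lemma f2comb_eq0 t : (f2comb t == 0) = (t == (false, false, false)).
Proof.
case: t => [[a b] c] /=; apply/eqP/eqP => [|[-> -> ->]]; last by rewrite !mul0r !addr0.
case: c => /= [|]; rewrite ?mul0r ?addr0.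
  move=> /eqP; rewrite mul1r addrC addr_eq0 (oppr_pchar2 pcharF2) => /eqP om_sq.
  by have := om_sq_neq a b; rewrite om_sq eqxx.
case: b => /=; rewrite ?mul0r ?addr0.
  move=> /eqP; rewrite mul1r addrC addr_eq0 (oppr_pchar2 pcharF2) => /eqP om_a.
  by have := om_neq_nat a; rewrite om_a eqxx.
by case: a => // /eqP; rewrite oner_eq0.
Qed.

Lemma f2comb_inj : injective f2comb.
Proof.
have natr_addb (u v : bool) : (u (+) v)%:R = u%:R + v%:R :> F.
  by case: u v => [] []; rewrite /= ?addr0 ?add0r ?(addrr_pchar2 pcharF2).
have f2combD t t' :
    f2comb t + f2comb t' = f2comb (t.1.1 (+) t'.1.1, t.1.2 (+) t'.1.2, t.2 (+) t'.2).
  case: t t' => [[a b] c] [[a' b'] c'] /=; rewrite !natr_addb; ring.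
move=> t t' /eqP; rewrite -subr_eq0 (oppr_pchar2 pcharF2) f2combD f2comb_eq0.
by case: t t' => [[[] []] []] [[[] []] []].
Qed.
End F2Coordinates.

Section RowsOn.
Variables (F : finFieldType) (m : nat).

Definition rows_on (S : {set 'I_m}) : {set 'rV[F]_m} :=
  [set x : 'rV[F]_m | [forall i, (i \notin S) ==> (x 0 i == 0)]].

Lemma card_rows_on S : #|rows_on S| = (#|F| ^ #|S|)%N.
Proof.
pose row_of (f : {ffun 'I_m -> F}) : 'rV[F]_m := \row_i f i.
have row_of_inj : injective row_of.
  by move=> f1 f2 /rowP eq_f; apply/ffunP => i; have := eq_f i; rewrite !mxE.
have -> : rows_on S = row_of @: pffun_on (0 : F) S predT.
  apply/setP => x; rewrite inE; apply/forallP/imsetP => [x_on | [f /pffun_onP [f_on _] ->] i].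
    exists [ffun i => x 0 i]; last by apply/rowP => i; rewrite !mxE ffunE.
    apply/pffun_onP; split=> //; apply/subsetP => i; rewrite inE ffunE.
    by apply: contraR => iNS; rewrite (implyP (x_on i) iNS).
  rewrite mxE; apply/implyP => iNS; apply: contraNT iNS => fi_neq0.
  by apply: (subsetP f_on); rewrite inE.
by rewrite card_imset // card_pffun_on.
Qed.

Definition dotmx (x g : 'rV[F]_m) : F := (x *m g^T) 0 0.

Lemma dotmxDl x y g : dotmx (x + y) g = dotmx x g + dotmx y g.
Proof. by rewrite /dotmx mulmxDl mxE. Qed.

Lemma dotmxZl t x g : dotmx (t *: x) g = t * dotmx x g.
Proof. by rewrite /dotmx -scalemxAl mxE. Qed.

Lemma dotmx_delta i g : dotmx (delta_mx 0 i) g = g 0 i.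
Proof. by rewrite /dotmx -rowE !mxE. Qed.

Section DotFibers.
Variables (S : {set 'rV[F]_m}) (g : 'rV[F]_m) (i : 'I_m).
Hypothesis gi_neq0 : g 0 i != 0.
Hypothesis S_shift : forall x t, x \in S -> x + t *: delta_mx 0 i \in S.

Lemma card_dotmx_fiber c :
  #|[set x in S | dotmx x g == c]| = #|[set x in S | dotmx x g == 0]|.
Proof.
pose shift t (x : 'rV[F]_m) := x + t *: delta_mx 0 i.
have shiftK t : cancel (shift t) (shift (- t)) by move=> x; rewrite /shift scaleNr addrK.
have dot_shift t x : dotmx (shift t x) g = dotmx x g + t * g 0 i.
  by rewrite dotmxDl dotmxZl dotmx_delta.
set t := c / g 0 i.
rewrite -(card_imset _ (can_inj (shiftK (- t)))); apply: eq_card => y.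
apply/imsetP/idP => [[x] | ]; rewrite inE.
  move=> /andP [xS /eqP x_c] ->.
  by rewrite inE S_shift // dot_shift x_c mulNr /t divfK // subrr eqxx.
move=> /andP [yS /eqP y0]; exists (shift t y); last by rewrite shiftK.
by rewrite inE S_shift // dot_shift y0 add0r /t divfK // eqxx.
Qed.

Lemma card_dotmx_neq0 :
  (#|[set x in S | dotmx x g != 0%R]| * #|F| = (#|F| - 1) * #|S|)%N.
Proof.
pose N c := #|[set x in S | dotmx x g == c]|.
have card_sum (Q : pred F) : #|[set x in S | Q (dotmx x g)]| = (\sum_(c | Q c) N c)%N.
  rewrite -sum1_card (partition_big (dotmx^~ g) Q) => [|x]; last by rewrite inE => /andP [].
  apply: eq_bigr => c Qc; rewrite /N -sum1_card; apply: eq_bigl => x.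
  by rewrite !inE; case: (dotmx x g =P c) => [->|_]; rewrite ?Qc ?eqxx ?andbF ?andbT.
have -> : #|S| = #|[set x in S | predT (dotmx x g)]| by apply: eq_card => x; rewrite inE andbT.
have N_const c : N c = N 0 := card_dotmx_fiber c.
rewrite (card_sum (predC1 0)) card_sum !(eq_bigr _ (fun c _ => N_const c)) !sum_nat_const.
by rewrite cardC1 subn1 -mulnA [(N 0%R * _)%N]mulnC.
Qed.

End DotFibers.

Lemma rows_on_shift (S : {set 'I_m}) i x t :
  i \in S -> x \in rows_on S -> x + t *: delta_mx 0 i \in rows_on S.
Proof.
move=> iS; rewrite !inE => /forallP x_on; apply/forallP => k; apply/implyP => kNS.
rewrite !mxE (eqP (implyP (x_on k) kNS)) add0r.
case: (k =P i) => [k_i | _]; first by rewrite k_i iS in kNS.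
by rewrite andbF mulr0.
Qed.

Lemma mem0_rows_on (S : {set 'I_m}) : 0 \in rows_on S.
Proof. by rewrite inE; apply/forallP => i; rewrite mxE eqxx implybT. Qed.

Lemma card_rows_on_punctured S : #|rows_on S :\ 0| = (#|F| ^ #|S| - 1)%N.
Proof. by rewrite -card_rows_on (cardsD1 0 (rows_on S)) mem0_rows_on add1n subn1. Qed.

Lemma dotmx_rows_on_eq0 (S : {set 'I_m}) x (g : 'rV[F]_m) :
  x \in rows_on S -> ~~ [exists i in S, g 0 i != 0] -> dotmx x g = 0.
Proof.
rewrite inE negb_exists_in => /forallP x_on /forallP g_on.
rewrite /dotmx mxE big1 // => i _; rewrite mxE.
case: (boolP (i \in S)) => iS; first by rewrite (eqP (negPn (implyP (g_on i) iS))) mulr0.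
by rewrite (eqP (implyP (x_on i) iS)) mul0r.
Qed.

End RowsOn.

Section LinearCodes.
Variable F : finFieldType.

Lemma hw_eq0 n (c : 'rV[F]_n) : (hw c == 0)%N = (c == 0).
Proof.
rewrite cards_eq0; apply/eqP/eqP => [supp0 | ->]; last first.
  by apply/setP => j; rewrite !inE mxE eqxx.
apply/rowP => j; rewrite mxE; apply/eqP; apply: contraT => cj.
by have := in_set0 j; rewrite -supp0 inE cj.
Qed.

Lemma lin_code_code m (P : {set 'rV[F]_m}) : lin_code (code P).
Proof.
split; first by apply/imsetP; exists 0; rewrite // /cw mul0mx.
move=> a _ _ /imsetP [v _ ->] /imsetP [w _ ->]; apply/imsetP; exists (a *: v + w) => //.
by rewrite /cw mulmxDl scalemxAl.
Qed.

Lemma cw_entry m (P : {set 'rV[F]_m}) v j : cw P v 0 j = dotmx (enum_val j) v.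
Proof. by rewrite /cw /dotmx !mxE; apply: eq_bigr => i _; rewrite !mxE mulrC. Qed.

Lemma hw_cw m (P : {set 'rV[F]_m}) v : hw (cw P v) = #|[set x in P | dotmx x v != 0]|.
Proof.
rewrite /hw -(card_imset _ (@enum_val_inj _ P)); apply: eq_card => x; rewrite inE.
apply/imsetP/andP => [[j] | [xP x_v]].
  by rewrite inE cw_entry => j_v ->; split => //; apply: enum_valP.
by exists (enum_rank_in xP x); rewrite ?inE ?cw_entry enum_rankK_in.
Qed.

Lemma one_weight_minimal n (C : {set 'rV[F]_n}) :
  lin_code C -> one_weight C -> minimal_code C.
Proof.
move=> [_ C_lin] [w hwC] c cC c_neq0; split=> // c' c'C c'_neq0 supp_c'.
have supp_eq : supp c' = supp c.
  apply/eqP; rewrite eqEcard supp_c' -[#|supp c|]/(hw c) -[#|supp c'|]/(hw c').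
  by rewrite !hwC ?leqnn.
have /set0Pn [j] : supp c != set0 by rewrite -cards_eq0 -/(hw c) hw_eq0.
rewrite inE => cj; set a := c' 0 j / c 0 j; exists a.
(* c'' = c' - a c lies in supp c but vanishes at j, so its weight is below w. *)
pose c'' := (- a) *: c + c'.
have j_c'' : j \notin supp c'' by rewrite inE !mxE mulNr divfK // addNr eqxx.
have supp_c'' : supp c'' \proper supp c.
  rewrite properEneq; apply/andP; split; first by apply: contraNneq j_c'' => ->; rewrite inE.
  apply/subsetP => i; rewrite !inE !mxE; apply: contraR; rewrite negbK => /eqP ci.
  have : i \notin supp c' by rewrite supp_eq inE ci eqxx.
  by rewrite inE negbK => /eqP ->; rewrite ci mulr0 addr0 eqxx.
apply/eqP; rewrite -subr_eq0 -scaleNr addrC -/c''.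
apply: contraTT (proper_card supp_c'') => c''_neq0.
rewrite -[#|supp c''|]/(hw c'') -[#|supp c|]/(hw c) !hwC ?ltnn //.
exact: C_lin.
Qed.

Lemma card_submx k m (A : 'M[F]_(k, m)) :
  #|[set v : 'rV[F]_m | (v <= A)%MS]| = (#|F| ^ \rank A)%N.
Proof.
pose comb (u : 'rV[F]_(\rank A)) := u *m row_base A.
have comb_inj : injective comb.
  move=> u u' /eqP; rewrite -subr_eq0 -mulmxBl mulmx_free_eq0 ?row_base_free //.
  by rewrite subr_eq0 => /eqP.
have -> : [set v : 'rV[F]_m | (v <= A)%MS] = comb @: setT.
  apply/setP => v; rewrite inE -(eq_row_base A).
  by apply/submxP/imsetP => [[u ->] | [u _ ->]]; exists u.
by rewrite card_imset // cardsT card_mx mul1n.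
Qed.

Lemma card_mulmx_preim k n (G : 'M[F]_(k, n)) (Q : pred 'rV[F]_n) :
  #|[set v : 'rV[F]_k | Q (v *m G)]| =
  (#|[set v : 'rV[F]_k | v *m G == 0%R]| * #|[set c in [set v *m G | v : 'rV[F]_k] | Q c]|)%N.
Proof.
set C := [set c in [set v *m G | v : 'rV[F]_k] | Q c].
rewrite -sum1_card (partition_big (mulmx^~ G) [in C]) /=; last first.
  by move=> v; rewrite !inE => Qv; rewrite Qv andbT; apply/imsetP; exists v.
rewrite -[#|C|]sum1_card big_distrr /=.
apply: eq_bigr => c; rewrite inE => /andP [/imsetP [v0 _ ->] Q_v0]; rewrite muln1 sum1dep_card.
rewrite -(card_imset _ (addIr (- v0))); apply: eq_card => v; rewrite inE.
apply/imsetP/idP => [[x] | /eqP v0_ker]; rewrite ?inE.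
  by move=> /andP [_ /eqP x_v0] ->; rewrite mulmxBl x_v0 subrr.
by exists (v + v0); rewrite ?addrK // !inE mulmxDl v0_ker add0r Q_v0 eqxx.
Qed.

Lemma Zcount0 m (P : {set 'rV[F]_m}) : Zcount P 0 = #|[set v | cw P v == 0]|.
Proof. by apply: eq_card => v; rewrite !inE hw_eq0. Qed.

Lemma Zcount_Acount m (P : {set 'rV[F]_m}) i :
  Zcount P i = (Zcount P 0 * Acount (code P) i)%N.
Proof. by rewrite Zcount0; apply: (card_mulmx_preim (genmatP P) (fun c => hw c == i)). Qed.

Lemma card_set_nat (T : finType) (p : pred T) : #|[set x | p x]| = (\sum_x p x)%N.
Proof. by rewrite -sum1_card big_mkcond; apply: eq_bigr => x _; rewrite inE; case: (p x). Qed.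

Lemma card_mulmx_col_neq0 k n (G : 'M[F]_(k, n)) j :
  (#|[set v : 'rV[F]_k | (v *m G) 0%R j != 0%R]| <= (#|F| - 1) * #|F| ^ (k - 1))%N.
Proof.
have [i Gij | col_j0] := pickP (fun i => G i j != 0); last first.
  suff -> : [set v : 'rV[F]_k | (v *m G) 0 j != 0] = set0 by rewrite cards0.
  apply/setP => v; rewrite !inE mxE big1 ?eqxx // => i _.
  by rewrite (eqP (negbFE (col_j0 i))) mulr0.
have dotmx_col v : dotmx v (col j G)^T = (v *m G) 0 j.
  by rewrite /dotmx trmxK colE mulmxA -colE !mxE.
have := card_dotmx_neq0 (S := setT) (i := i) (g := (col j G)^T).
rewrite !mxE => /(_ Gij (fun x t _ => in_setT _)).
have -> : #|[set: 'rV[F]_k]| = (#|F| ^ (k - 1) * #|F|)%N.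
  by rewrite cardsT card_mx mul1n -expnSr subn1 prednK // (leq_ltn_trans _ (ltn_ord i)).
rewrite mulnA => /eqP; rewrite eqn_pmul2r ?(ltnW (card_finNzRing_gt1 _)) // => /eqP <-.
by apply: eq_leq; apply: eq_card => v; rewrite !inE dotmx_col.
Qed.

Lemma sum_hw_mulmx_le k n (G : 'M[F]_(k, n)) :
  (\sum_(v : 'rV[F]_k) hw (v *m G) <= n * ((#|F| - 1) * #|F| ^ (k - 1)))%N.
Proof.
rewrite (eq_bigr _ (fun v _ => card_set_nat (fun j => (v *m G) 0 j != 0))) exchange_big /=.
rewrite -[n in (n * _)%N]card_ord -sum_nat_const; apply: leq_sum => j _.
by rewrite -card_set_nat card_mulmx_col_neq0.
Qed.

Lemma plotkin_bound k n (G : 'M[F]_(k, n)) d :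
  (forall v : 'rV[F]_k, v != 0 -> (d <= hw (v *m G))%N) ->
  ((#|F| ^ k - 1) * d <= n * ((#|F| - 1) * #|F| ^ (k - 1)))%N.
Proof.
move=> hw_ge; apply: leq_trans (sum_hw_mulmx_le G).
rewrite (bigD1 0) //=; apply: leq_trans _ (leq_addl _ _).
have -> : ((#|F| ^ k - 1) * d = \sum_(v : 'rV[F]_k | v != 0%R) d)%N.
  rewrite sum_nat_cond_const (_ : [set v | v != 0] = [set~ 0]).
    by rewrite cardsC1 card_mx mul1n subn1.
  by apply/setP => v; rewrite !inE.
exact: leq_sum.
Qed.

Lemma distance_optimal_simplex k :
  (0 < k)%N -> distance_optimal F (#|F| ^ k - 1) k ((#|F| - 1) * #|F| ^ (k - 1)).
Proof.
move=> k_gt0 [G [rankG [_ hw_ge]]].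
have G_free : row_free G by rewrite /row_free rankG.
have /plotkin_bound :
    forall v : 'rV[F]_k, v != 0 -> ((#|F| - 1) * #|F| ^ (k - 1) < hw (v *m G))%N.
  by move=> v v_neq0; apply: hw_ge; [apply/imsetP; exists v | rewrite mulmx_free_eq0].
have qk_gt1 : (1 < #|F| ^ k)%N by rewrite -(expn0 #|F|) ltn_exp2l ?card_finNzRing_gt1.
by rewrite leq_pmul2l ?subn_gt0 // ltnn.
Qed.

End LinearCodes.

Lemma geometric_sum q l : (0 < q)%N -> ((q - 1) * \sum_(i < l) q ^ i = q ^ l - 1)%N.
Proof.
move=> q_gt0; elim: l => [|l IH]; first by rewrite big_ord0 muln0.
rewrite big_ord_recr /= mulnDr IH expnS mulnBl mul1n.
have := leq_pmull (q ^ l) q_gt0; have := expn_gt0 q l; rewrite q_gt0; lia.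
Qed.

Lemma ceildiv_mull c b : (0 < b)%N -> ceildiv (c * b) b = c.
Proof. by move=> b_gt0; rewrite /ceildiv divnMDl // divn_small ?addn0 // prednK. Qed.

Lemma griesmer_simplex q l :
  (0 < q)%N -> (0 < l)%N -> griesmer q (q ^ l - 1) l ((q - 1) * q ^ (l - 1)).
Proof.
move=> q_gt0 l_gt0; rewrite /griesmer -(geometric_sum _ q_gt0) big_distrr /=.
rewrite (reindex_inj rev_ord_inj) /=; apply: eq_bigr => i _.
have -> : ((q - 1) * q ^ (l - 1) = (q - 1) * q ^ i * q ^ (l - i.+1))%N.
  by rewrite -mulnA -expnD; congr (_ * _ ^ _)%N; have := ltn_ord i; lia.
by rewrite ceildiv_mull ?expn_gt0 ?q_gt0.
Qed.

Section EightElementField.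
Variables (F : finFieldType) (om : F).
Hypothesis card_F : #|F| = 8%N.
Hypothesis om_root : om ^+ 3 + om + 1 = 0.

Lemma pchar_F2 : 2 \in [pchar F].
Proof. by apply: (@card_finPcharP _ 2 3) => //; rewrite card_F. Qed.

Lemma f2comb_bij : bijective (f2comb om).
Proof.
apply: inj_card_bij; first exact: (@f2comb_inj _ pchar_F2 _ om_root).
by rewrite card_F !card_prod card_bool.
Qed.

Lemma Dset_rows_on m (L : {set 'I_m}) : Dset om L = rows_on F L.
Proof.
have [coords _ coordsK] := f2comb_bij.
apply/setP => x; rewrite inE; apply/idP/idP.
  case/existsP => a /andP [aL /existsP [b /andP [bL /existsP [c /andP [cL /eqP ->]]]]].
  rewrite inE; apply/forallP => i; apply/implyP => iNL.
  have Delta_out w : w \in Delta F L -> w 0 i = 0.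
    rewrite inE => /forallP /(_ i) /andP [_ /implyP w_in].
    by apply/eqP; apply: contraNT iNL.
  by rewrite !mxE !Delta_out // !mulr0 !addr0.
rewrite inE => /forallP x_on.
pose digit p : 'rV[F]_m := \row_i ((i \in L) && p (coords (x 0 i)) : nat)%:R.
have digitL p : digit p \in Delta F L.
  rewrite inE; apply/forallP => i; rewrite mxE.
  by case: (i \in L); case: (p _); rewrite /= ?eqxx ?oner_eq0.
apply/existsP; exists (digit (fun t => t.1.1)); rewrite digitL.
apply/existsP; exists (digit (fun t => t.1.2)); rewrite digitL.
apply/existsP; exists (digit (fun t => t.2)); rewrite digitL.
apply/eqP/rowP => i; rewrite !mxE; case: (boolP (i \in L)) => iL /=.
  rewrite -{1}[x 0 i]coordsK; case: (coords (x 0 i)) => [[a b] c] /=.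
  by rewrite (mulrC om) (mulrC (om ^+ 2)).
by rewrite (eqP (implyP (x_on i) iL)) !mulr0 !addr0.
Qed.

End EightElementField.

Section SupportCode.
Variables (F : finFieldType) (m : nat) (L : {set 'I_m}).

Let P := rows_on F L :\ 0.

Lemma hw_cw_rows_on (v : 'rV[F]_m) :
  [exists i in L, v 0 i != 0] -> hw (cw P v) = ((#|F| - 1) * #|F| ^ (#|L| - 1))%N.
Proof.
case/existsP => i /andP [iL vi]; rewrite hw_cw.
have -> : [set x in P | dotmx x v != 0] = [set x in rows_on F L | dotmx x v != 0].
  apply/setP => x; rewrite !inE; case: (x =P 0) => [-> | _] //=.
  by rewrite /dotmx mul0mx mxE eqxx andbF.
have := card_dotmx_neq0 vi (fun x t => @rows_on_shift F m L i x t iL).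
have -> : #|rows_on F L| = (#|F| ^ (#|L| - 1) * #|F|)%N.
  by rewrite card_rows_on -expnSr subn1 prednK // card_gt0; apply/set0Pn; exists i.
rewrite mulnA => /eqP; rewrite eqn_pmul2r ?(ltnW (card_finNzRing_gt1 _)) //.
by move=> /eqP.
Qed.

Lemma cw_rows_on_eq0 (v : 'rV[F]_m) : (cw P v == 0) = ~~ [exists i in L, v 0 i != 0].
Proof.
case: (boolP [exists i in L, v 0 i != 0]) => [v_meets | v_avoids] /=.
  apply/negbTE; rewrite -hw_eq0 hw_cw_rows_on // -lt0n muln_gt0 expn_gt0.
  by rewrite subn_gt0 card_finNzRing_gt1 (ltnW (card_finNzRing_gt1 _)).
apply/eqP/rowP => j; rewrite cw_entry mxE (dotmx_rows_on_eq0 _ v_avoids) //.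
by have := enum_valP j; rewrite !inE => /andP [].
Qed.

Lemma card_ker_cw_rows_on : #|[set v : 'rV[F]_m | cw P v == 0]| = (#|F| ^ (m - #|L|))%N.
Proof.
have -> : [set v : 'rV[F]_m | cw P v == 0] = rows_on F (~: L).
  apply/setP => v; rewrite !inE cw_rows_on_eq0 negb_exists_in.
  by apply/eq_forallb => i; rewrite inE !negbK.
rewrite card_rows_on; congr (_ ^ _)%N; have := cardsC L; rewrite card_ord; lia.
Qed.

Lemma rank_genmatP_rows_on : \rank (genmatP P) = #|L|.
Proof.
have := card_submx (kermx (genmatP P)).
have -> : [set v : 'rV[F]_m | (v <= kermx (genmatP P))%MS] = [set v | cw P v == 0].
  by apply/setP => v; rewrite !inE sub_kermx.
rewrite card_ker_cw_rows_on mxrank_ker => /eqP.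
rewrite eqn_exp2l ?card_finNzRing_gt1 // => /eqP.
have := rank_leq_row (genmatP P); have := max_card L; rewrite card_ord; lia.
Qed.

Lemma one_weight_code_rows_on : one_weight (code P).
Proof.
exists ((#|F| - 1) * #|F| ^ (#|L| - 1))%N => _ /imsetP [v _ ->].
by rewrite cw_rows_on_eq0 negbK; apply: hw_cw_rows_on.
Qed.

Lemma is_min_dist_code_rows_on :
  L != set0 -> is_min_dist (code P) ((#|F| - 1) * #|F| ^ (#|L| - 1)).
Proof.
move=> /set0Pn [i iL].
split; last by move=> _ /imsetP [v _ ->]; rewrite cw_rows_on_eq0 negbK => /hw_cw_rows_on ->.
have ei_meets : [exists j in L, (delta_mx 0 i : 'rV[F]_m) 0 j != 0].
  by apply/existsP; exists i; rewrite iL !mxE !eqxx oner_eq0.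
exists (cw P (delta_mx 0 i)); first exact: imset_f.
by rewrite cw_rows_on_eq0 ei_meets hw_cw_rows_on.
Qed.

End SupportCode.

Theorem mainTheorem4 (F : finFieldType) (HF : #|F| = 8%N)
  (om : F) (Hom : om ^+ 3 + om + 1 = 0)
  (m : nat) (L : {set 'I_m}) (HL0 : L != set0) (HL1 : L != setT) :
  let P := Dstar om L in
  let C := code P in
  let l := #|L| in
  let d := (7 * 2 ^ (3 * (l - 1)))%N in
  lin_code C /\ one_weight C /\
  #|P| = (2 ^ (3 * l) - 1)%N /\
  \rank (genmatP P) = l /\
  is_min_dist C d /\
  minimal_code C /\
  griesmer 8 #|P| l d /\
  distance_optimal F #|P| l d /\
  (Zcount P 0 = (2 ^ (3 * (m - l)))%N /\
      (forall i, (i <= #|P|)%N -> Zcount P i = (Zcount P 0 * Acount C i)%N)).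
Proof.
rewrite /Dstar (Dset_rows_on HF Hom) /=; set P := rows_on F L :\ 0.
have pow8 x : (2 ^ (3 * x) = #|F| ^ x)%N by rewrite expnM HF.
have d_eq : (7 * 2 ^ (3 * (#|L| - 1)) = (#|F| - 1) * #|F| ^ (#|L| - 1))%N.
  by rewrite pow8 HF.
have card_P : #|P| = (#|F| ^ #|L| - 1)%N := card_rows_on_punctured F L.
have L_gt0 : (0 < #|L|)%N by rewrite card_gt0.
rewrite d_eq !pow8 -HF.
split; first exact: lin_code_code.
split; first exact: one_weight_code_rows_on.
split; first exact: card_P.
split; first exact: rank_genmatP_rows_on.
split; first exact: is_min_dist_code_rows_on.
split.
  by apply: one_weight_minimal; [apply: lin_code_code | apply: one_weight_code_rows_on].
split; first by rewrite card_P; apply: griesmer_simplex; rewrite // HF.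
split; first by rewrite card_P; apply: distance_optimal_simplex.
split; first by rewrite Zcount0 card_ker_cw_rows_on.
by move=> i _; apply: Zcount_Acount.
Qed.
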